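(* Let $T\ge 1$ be an integer and $p^*\in(0,1]$. For integers $l\ge1$ and $0\le n\le l-1$ with $l-n\le T$ put $P^l_D(n)=\frac{\prod_{i=0}^{l-n-1}(1-\frac{i}{T})}{T^{n}}$. For $l\ge1$ let $n^*_l$ be the least $n\in\{0,\dots,l-1\}$ with $P^l_D(n)\le p^*$, if such $n$ exists (otherwise $n^*_l$ is undefined). Let $l_{max}$ be the least $l\in\{1,\dots,T\}$ with $P^l_D(0)\le p^*$, and assume $l_{max}\le \lfloor T-\sqrt{T}\rfloor+1$. Then for every $l$ with $2\le l\le l_{max}$ such that $n^*_{l-1}$ is defined, $n^*_l$ is defined and $n^*_{l-1}\le n^*_l+1$.
   Context: $p^*$ is the threshold probability for a random device to share a given device ID. *)

From HB Require Import structures.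
From mathcomp Require Import all_boot all_order all_algebra.
From mathcomp Require Import reals.
Set Implicit Arguments. Unset Strict Implicit. Unset Printing Implicit Defensive.
Import Order.TTheory GRing.Theory Num.Theory.
Local Open Scope ring_scope.

Definition PD (R : realType) (T l n : nat) : R :=
  (\prod_(i < l - n) (1 - (i : nat)%:R / T%:R)) / (T%:R ^+ n).

Definition PD_dom (T l n : nat) : Prop := (n < l)%N /\ (l - n <= T)%N.

Definition is_nstar (R : realType) (T : nat) (pstar : R) (l n : nat) : Prop :=
  PD_dom T l n /\ PD R T l n <= pstar /\
  (forall m : nat, (m < n)%N -> PD_dom T l m -> ~ (PD R T l m <= pstar)).

Definition is_lmax (R : realType) (T : nat) (pstar : R) (lm : nat) : Prop :=
  (1 <= lm <= T)%N /\ PD R T lm 0 <= pstar /\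
  (forall l : nat, (1 <= l)%N -> (l < lm)%N -> ~ (PD R T l 0 <= pstar)).

From HB Require Import structures.
From mathcomp Require Import all_boot all_order all_algebra.
From mathcomp Require Import reals.
From mathcomp Require Import zify ring lra.
Set Implicit Arguments. Unset Strict Implicit. Unset Printing Implicit Defensive.
Import Order.TTheory GRing.Theory Num.Theory.
Local Open Scope ring_scope.

(* Passing from (l-1, m+1) to (l, m) multiplies P_D by
   (T - k)(T - k - 1) / T with k = l - m - 2, and this ratio is at least 1 as
   long as k + 1 <= T - sqrt T, which the bound on l_max guarantees for every
   l <= l_max.  Hence below n*_{l-1} - 1 every P^l_D(m) still exceeds p*,
   while P^l_D(n*_{l-1} + 1) = P^{l-1}_D(n*_{l-1}) / T <= p*, so n*_l exists
   and lies in [n*_{l-1} - 1, n*_{l-1} + 1]. *)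

Section ProbDuplicate.
Variables (R : realType) (T : nat).
Hypothesis T_gt0 : (0 < T)%N.
Local Notation PD := (PD R T).

Let T_neq0 : (T%:R : R) != 0. Proof. by rewrite pnatr_eq0 -lt0n. Qed.

(* The factor i = T vanishes, so P_D is nonnegative even outside its domain. *)
Lemma PD_ge0 l n : 0 <= PD l n.
Proof.
rewrite /PD divr_ge0 ?exprn_ge0 ?ler0n //.
have [lenT | ltTn] := leqP (l - n) T.
  apply: prodr_ge0 => i _; rewrite subr_ge0 ler_pdivrMr ?ltr0n // mul1r ler_nat.
  by rewrite ltnW // (leq_trans (ltn_ord i)).
by rewrite (bigD1 (Ordinal ltTn)) //= divff // subrr mul0r.
Qed.

Lemma PDS l n : PD l n.+1 = PD l.-1 n / T%:R.
Proof.
rewrite /PD; have -> : (l - n.+1 = l.-1 - n)%N by lia.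
by rewrite exprS invfM mulrA mulrAC.
Qed.

Lemma PDS_le l n : PD l n.+1 <= PD l.-1 n.
Proof.
rewrite PDS ler_pdivrMr ?ltr0n // ler_peMr ?ler1n //; exact: PD_ge0.
Qed.

Lemma PD_recr l m k : (l - m = k.+2)%N ->
  PD l m = PD l.-1 m.+1 * ((T%:R - k%:R) * (T%:R - k.+1%:R) / T%:R).
Proof.
move=> lm; have lm1 : (l.-1 - m.+1 = k)%N by lia.
rewrite /PD lm lm1 !big_ord_recr /= exprS.
by field; rewrite T_neq0 expf_neq0.
Qed.

Lemma PD_ratio_ge1 k : k.+1%:R <= T%:R - Num.sqrt (T%:R : R) ->
  1 <= (T%:R - k%:R) * (T%:R - k.+1%:R) / (T%:R : R).
Proof.
rewrite -natr1 ler_pdivlMr ?ltr0n // mul1r => k_le.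
have s_ge0 : 0 <= Num.sqrt (T%:R : R) := sqrtr_ge0 _.
have sqr_s : Num.sqrt (T%:R : R) ^+ 2 = T%:R by rewrite sqr_sqrtr.
move: k_le s_ge0 sqr_s; set s := Num.sqrt _; set t := (T%:R : R).
nra.
Qed.

Lemma PD_pred_le l m : (m.+2 <= l)%N ->
  (l - m - 1)%:R <= T%:R - Num.sqrt (T%:R : R) -> PD l.-1 m.+1 <= PD l m.
Proof.
move=> ml le_sqrt; have lm : (l - m = (l - m - 2).+2)%N by lia.
rewrite (PD_recr lm) ler_peMr ?PD_ge0 // PD_ratio_ge1 //.
by apply: le_trans le_sqrt; rewrite ler_nat; lia.
Qed.

End ProbDuplicate.

Lemma is_nstar_exists (R : realType) (T : nat) (pstar : R) l n :
  PD_dom T l n -> PD R T l n <= pstar ->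
  exists2 n' : nat, is_nstar T pstar l n' & (n' <= n)%N.
Proof.
move=> [nl lnT] PDn.
pose below m := [&& (m < l)%N, (l - m <= T)%N & PD R T l m <= pstar].
have ex_below : exists m, below m by exists n; apply/and3P.
case: (ex_minnP ex_below) => n' /and3P [n'l ln'T PDn'] min_n'.
exists n'; last by apply: min_n'; apply/and3P.
split; first by [].
split=> // m mn' [ml lmT] PDm.
by have := min_n' m (introT and3P (And3 ml lmT PDm)); rewrite leqNgt mn'.
Qed.

Theorem corollary1 (R : realType) (T : nat) (pstar : R) (lmax : nat) :
  (1 <= T)%N -> 0 < pstar -> pstar <= 1 ->
  is_lmax T pstar lmax ->
  (lmax%:Z <= Num.floor (T%:R - Num.sqrt (T%:R : R)) + 1)%R ->
  forall l : nat, (2 <= l)%N -> (l <= lmax)%N ->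
  forall n1 : nat, is_nstar T pstar l.-1 n1 ->
  exists n2 : nat, is_nstar T pstar l n2 /\ (n1 <= n2 + 1)%N.
Proof.
move=> T_gt0 _ _ _ lmax_le l l2 l_le n1 [[n1l ln1T] [PDn1 min_n1]].
have l_le_sqrt : (l.-1)%:R <= T%:R - Num.sqrt (T%:R : R).
  suff : ((l.-1)%:Z <= Num.floor (T%:R - Num.sqrt (T%:R : R)))%R.
    by rewrite floor_ge_int.
  lia.
have gap m : (m.+1 < n1)%N -> PD_dom T l m -> pstar < PD R T l m.
  move=> mn1 [ml lmT]; rewrite ltNge; apply/negP => PDm.
  apply: (min_n1 m.+1) => //; first by split; lia.
  apply: le_trans (PD_pred_le T_gt0 _ _) PDm; first by lia.
  by apply: le_trans l_le_sqrt; rewrite ler_nat; lia.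
have [n2 nstar_n2 _] :
    exists2 n2, is_nstar T pstar l n2 & (n2 <= n1.+1)%N.
  apply: is_nstar_exists; first by split; lia.
  exact: le_trans (PDS_le _ _ _ _) PDn1.
exists n2; split=> //; case: nstar_n2 => [[n2l ln2T] [PDn2 _]].
rewrite addn1 leqNgt; apply/negP => n2n1.
by have := gap n2 n2n1 (conj n2l ln2T); rewrite ltNge PDn2.
Qed.
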